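(* Let $\mathcal{C}$ be an $(n,s)$-curve of genus $g$ and let $D$ be a reduced non-special positive divisor of degree $g$ on the affine part of $\mathcal{C}$. Let $I_D\subset\mathbb{C}[x,y]/(f)$ be the ideal of polynomial functions vanishing on $D$ (with multiplicities). Then the images of the $g$ basis monomials $\upsilon_{\mathfrak{w}_1},\dots,\upsilon_{\mathfrak{w}_g}$ form a basis of the vector space $\big(\mathbb{C}[x,y]/(f)\big)/I_D$; that is, every polynomial function on $\mathcal{C}$ is congruent modulo $I_D$ to a unique linear combination of $\upsilon_{\mathfrak{w}_1},\dots,\upsilon_{\mathfrak{w}_g}$.
   Context: An $(n,s)$-curve ($n,s\geqslant2$ coprime) is $f(x,y;\lambda)\equiv -y^n+x^s+\sum_{j=0}^{n-2}\sum_{i=0}^{s-2}\lambda_{ns-in-js}y^jx^i=0$, $\lambda_k\in\mathbb{C}$, $\lambda_k=0$ for $k\leqslant0$, assumed of genus $g=\tfrac12(n-1)(s-1)$, compactified by one point $\infty$. Weights: $\mathrm{wgt}\,x=n$, $\mathrm{wgt}\,y=s$; monomials $\mathfrak{m}_{in+js}=x^iy^j$ ($0\leqslant j<n$) indexed by weight. Gap sequence $\mathfrak{W}=\mathbb{N}_0\setminus\{an+bs\mid a,b\in\mathbb{N}_0\}=\{\mathfrak{w}_1<\dots<\mathfrak{w}_g\}$. Basis monomials: $\upsilon_{\mathfrak{w}_i}=\mathfrak{m}_{2g-1-\mathfrak{w}_i}$, $i=1,\dots,g$; the differentials $\mathrm{d}u_{\mathfrak{w}_i}=\upsilon_{\mathfrak{w}_i}\,\mathrm{d}x/\partial_yf$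 form a basis of holomorphic differentials. A positive divisor is reduced if it contains no full fibre $\{(a,b_1),\dots,(a,b_n)\}$ of $x$; a degree $g$ divisor is non-special if no nonzero holomorphic differential vanishes on it. *)

(* Bivariate polynomials are  {poly {poly C}} : the OUTER variable is  y,
   the INNER variable (coefficients) is  x. *)
From HB Require Import structures.
From mathcomp Require Import all_boot all_order all_algebra.
From mathcomp.real_closed Require Import complex.
From mathcomp Require Import reals.

Set Implicit Arguments.
Unset Strict Implicit.
Unset Printing Implicit Defensive.

Import Order.TTheory GRing.Theory Num.Theory.
Local Open Scope ring_scope.

Section Curves.
Variable C : fieldType.

Definition Xp : {poly {poly C}} := ('X)%:P.
Definition Yp : {poly {poly C}} := 'X.

Definition cst (c : C) : {poly {poly C}} := c%:P%:P.

Definition evalXY (h : {poly {poly C}}) (P : C * C) : C := (h.[P.2%:P]).[P.1].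

Definition dX (h : {poly {poly C}}) : {poly {poly C}} := map_poly deriv h.
Definition dY (h : {poly {poly C}}) : {poly {poly C}} := deriv h.

(* the (n,s)-curve polynomial
   f = -y^n + x^s + sum_{j<=n-2} sum_{i<=s-2} lambda_{ns-in-js} y^j x^i,
   with lambda_k = 0 for k <= 0. *)
Definition nscurve (n s : nat) (lambda : nat -> C) : {poly {poly C}} :=
  - Yp ^+ n + Xp ^+ s +
  \sum_(j < n.-1) \sum_(i < s.-1)
     cst (if (i * n + j * s < n * s)%N then lambda (n * s - i * n - j * s)%N else 0)
       * (Yp ^+ j * Xp ^+ i).

(* the affine part of the curve is nonsingular (this is the standing
   assumption that the curve has genus g = (n-1)(s-1)/2) *)
Definition affine_smooth (f : {poly {poly C}}) : Prop :=
  forall P : C * C, evalXY f P = 0 ->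
    evalXY (dX f) P != 0 \/ evalXY (dY f) P != 0.

(* h vanishes at the point P = (a,b) of the curve f = 0 to order >= m, i.e.
   h lies in  m_P^m  of the local ring  O_P = C[x,y]_{m_P} / (f),
   where m_P = (x - a, y - b):  there is u with u(P) <> 0 and
   u h in (f) + (x-a, y-b)^m  in C[x,y]. *)
Definition vanishes_at (f : {poly {poly C}}) (P : C * C) (m : nat)
    (h : {poly {poly C}}) : Prop :=
  exists (u q : {poly {poly C}}) (r : 'I_m.+1 -> {poly {poly C}}),
    evalXY u P != 0 /\
    u * h = q * f + \sum_(k < m.+1)
       r k * (Xp - cst P.1) ^+ k * (Yp - cst P.2) ^+ (m - k).

(* positive divisors on the affine part: finite multisets of points,
   represented by a sequence (multiplicity = number of occurrences);
   the degree is the size of the sequence *)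
Definition on_curve (f : {poly {poly C}}) (D : seq (C * C)) : Prop :=
  forall P, P \in D -> evalXY f P = 0.

Definition vanishes_on (f : {poly {poly C}}) (D : seq (C * C))
    (h : {poly {poly C}}) : Prop :=
  forall P, P \in D -> vanishes_at f P (count_mem P D) h.

(* the fibre of x over a: the points (a,b_1),...,(a,b_n), the b_k being the
   roots (with multiplicity) of f(a, y).  D is reduced if it contains no full
   fibre. *)
Definition fibre_poly (f : {poly {poly C}}) (a : C) : {poly C} :=
  map_poly (fun c : {poly C} => c.[a]) f.

Definition reduced (f : {poly {poly C}}) (D : seq (C * C)) : Prop :=
  ~ exists a : C, forall b : C,
      (mup b (fibre_poly f a) <= count_mem (a, b) D)%N.

Definition genus (n s : nat) : nat := ((n.-1 * s.-1) %/ 2)%N.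

Definition in_semigroup (n s w : nat) : bool :=
  has (fun i => has (fun j => (i * n + j * s == w)%N) (iota 0 w.+1)) (iota 0 w.+1).

(* all gaps are < 2g (Frobenius number 2g - 1) *)
Definition gaps (n s : nat) : seq nat :=
  [seq w <- iota 0 (2 * genus n s)%N | ~~ in_semigroup n s w].

(* w_{i+1}, for i : 'I_g  (0-based index) *)
Definition gap (n s : nat) (i : nat) : nat := nth 0 (gaps n s) i.

(* the monomial  m_k = x^i y^j  with  i n + j s = k,  0 <= j < n *)
Definition mono_j (n s k : nat) : nat :=
  find (fun j => (j * s <= k)%N && (n %| k - j * s)%N) (iota 0 n).
Definition mono (n s k : nat) : {poly {poly C}} :=
  Xp ^+ ((k - mono_j n s k * s) %/ n)%N * Yp ^+ (mono_j n s k).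

Definition upsilon (n s : nat) (i : nat) : {poly {poly C}} :=
  mono n s (2 * genus n s - 1 - gap n s i)%N.

(* D is non-special: no nonzero holomorphic differential
   du = (sum_i c_i upsilon_{w_i}) dx / f_y  vanishes on D.
   On the nonsingular affine part dx/f_y is holomorphic and nowhere zero,
   so ord_P(h dx/f_y) = ord_P(h) at affine points P. *)
Definition nonspecial (n s : nat) (f : {poly {poly C}}) (D : seq (C * C)) : Prop :=
  forall c : 'rV[C]_(genus n s),
    vanishes_on f D (\sum_(i < genus n s) cst (c ord0 i) * upsilon n s i) ->
    c = 0.

End Curves.

(* At a smooth point P = (a, b) of f = 0, whichever of x - a, y - b is not
   tangent is a local parameter t_P: modulo (f) + m_P^m every polynomial is a
   polynomial of degree < m in t_P.  Collecting these expansions up to order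
   mult_P(D) over the points of D gives a linear "jet" map to C^g, and a
   polynomial with zero jet vanishes on D.  On the span of the upsilon_w the jet
   map is injective by non-specialness, hence bijective since deg D = g, so the
   jet of any h is attained by exactly one combination of the upsilon_w. *)
From HB Require Import structures.
From mathcomp Require Import all_boot all_order all_algebra.
From mathcomp.real_closed Require Import complex.
From mathcomp Require Import reals.
From mathcomp Require Import ring.
From Stdlib Require Import IndefiniteDescription.
Import GRing.Theory Num.Theory.

Set Implicit Arguments.
Unset Strict Implicit.
Unset Printing Implicit Defensive.
Local Open Scope ring_scope.

Section PowIdeal.
Variable R : comNzRingType.
Implicit Types (X Y z : R) (k : nat).

Fixpoint in_pow_ideal X Y k z : Prop :=
  if k is k'.+1 then
    exists u v, [/\ in_pow_ideal X Y k' u, in_pow_ideal X Y k' v & z = X * u + Y * v]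
  else True.

Variables X Y : R.

Lemma in_pow_ideal0 k : in_pow_ideal X Y k 0.
Proof. by elim: k => //= k IH; exists 0, 0; rewrite !mulr0 addr0. Qed.

Lemma in_pow_idealD k z1 z2 :
  in_pow_ideal X Y k z1 -> in_pow_ideal X Y k z2 -> in_pow_ideal X Y k (z1 + z2).
Proof.
elim: k z1 z2 => //= k IH z1 z2 [u1 [v1 [hu1 hv1 ->]]] [u2 [v2 [hu2 hv2 ->]]].
by exists (u1 + u2), (v1 + v2); split; [exact: IH | exact: IH | ring].
Qed.

Lemma in_pow_idealMl k w z : in_pow_ideal X Y k z -> in_pow_ideal X Y k (w * z).
Proof.
elim: k w z => //= k IH w z [u [v [hu hv ->]]].
by exists (w * u), (w * v); split; [exact: IH | exact: IH | ring].
Qed.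

Lemma in_pow_idealXl k z : in_pow_ideal X Y k z -> in_pow_ideal X Y k.+1 (X * z).
Proof. by move=> hz; exists z, 0; rewrite mulr0 addr0; split=> //; apply: in_pow_ideal0. Qed.

Lemma in_pow_idealYl k z : in_pow_ideal X Y k z -> in_pow_ideal X Y k.+1 (Y * z).
Proof. by move=> hz; exists 0, z; rewrite mulr0 add0r; split=> //; apply: in_pow_ideal0. Qed.

Lemma in_pow_ideal_expX k : in_pow_ideal X Y k (X ^+ k).
Proof. by elim: k => //= k IH; rewrite exprS; apply: in_pow_idealXl. Qed.

Lemma in_pow_idealM k1 k2 z1 z2 : in_pow_ideal X Y k1 z1 -> in_pow_ideal X Y k2 z2 ->
  in_pow_ideal X Y (k1 + k2) (z1 * z2).
Proof.
elim: k1 z1 => [|k1 IH] z1 /=; first by move=> _; apply: in_pow_idealMl.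
move=> [u [v [hu hv ->]]] hz2.
by exists (u * z2), (v * z2); split; [exact: IH | exact: IH | ring].
Qed.

Lemma in_pow_idealE k z : in_pow_ideal X Y k z ->
  exists r : nat -> R, z = \sum_(i < k.+1) r i * X ^+ i * Y ^+ (k - i).
Proof.
elim: k z => [|k IH] z /=; first by exists (fun _ => z); rewrite big_ord1 !mulr1.
move=> [u [v [/IH [r ->] /IH [r' ->] ->]]].
exists (fun i => (if i is i'.+1 then r i' else 0) + (if (i < k.+1)%N then r' i else 0)).
under eq_bigr do rewrite !mulrDl.
rewrite big_split /= [X in _ = X + _]big_ord_recl [X in _ = _ + X]big_ord_recr /= ltnn.
rewrite !mul0r add0r addr0.
rewrite !mulr_sumr; congr (_ + _); apply: eq_bigr => i _.
  by rewrite /bump /= add1n subSS exprS !mulrA [X * r i]mulrC.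
by rewrite ltn_ord (subSn (ltnSE (ltn_ord i))) exprS; ring.
Qed.

End PowIdeal.

Lemma in_pow_ideal_sym (R : comNzRingType) (X Y : R) k z :
  in_pow_ideal X Y k z -> in_pow_ideal Y X k z.
Proof.
elim: k z => //= k IH z [u [v [hu hv ->]]].
by exists v, u; split; [exact: IH | exact: IH | rewrite addrC].
Qed.

Section Bivariate.
Variable C : fieldType.
Notation P2 := {poly {poly C}}.
Implicit Types (p q : P2) (P : C * C).

Lemma cstD (a b : C) : cst (a + b) = cst a + cst b.
Proof. by rewrite /cst !rmorphD. Qed.
Lemma cstB (a b : C) : cst (a - b) = cst a - cst b.
Proof. by rewrite /cst !rmorphB. Qed.
Lemma cstM (a b : C) : cst (a * b) = cst a * cst b.
Proof. by rewrite /cst !rmorphM. Qed.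
Lemma cst0 : cst (0 : C) = 0.
Proof. by rewrite /cst !rmorph0. Qed.
Lemma cst1 : cst (1 : C) = 1.
Proof. by rewrite /cst !rmorph1. Qed.
Lemma evalXYD p q P : evalXY (p + q) P = evalXY p P + evalXY q P.
Proof. by rewrite /evalXY !hornerD. Qed.
Lemma evalXYB p q P : evalXY (p - q) P = evalXY p P - evalXY q P.
Proof. by rewrite /evalXY !hornerD !hornerN. Qed.
Lemma evalXYM p q P : evalXY (p * q) P = evalXY p P * evalXY q P.
Proof. by rewrite /evalXY !hornerM. Qed.
Lemma evalXY_cst (c : C) P : evalXY (cst c) P = c.
Proof. by rewrite /evalXY /cst !hornerC. Qed.
Lemma evalXY_Xp P : evalXY (Xp C) P = P.1.
Proof. by rewrite /evalXY /Xp hornerC hornerX. Qed.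
Lemma evalXY_Yp P : evalXY (Yp C) P = P.2.
Proof. by rewrite /evalXY /Yp hornerX hornerC. Qed.

Variables a b : C.
Let X := Xp C - cst a.
Let Y := Yp C - cst b.

Lemma evalXY_X : evalXY X (a, b) = 0.
Proof. by rewrite evalXYB evalXY_Xp evalXY_cst subrr. Qed.
Lemma evalXY_Y : evalXY Y (a, b) = 0.
Proof. by rewrite evalXYB evalXY_Yp evalXY_cst subrr. Qed.

Lemma sub_evalXY_in_max_ideal p : in_pow_ideal X Y 1 (p - cst (evalXY p (a, b))).
Proof.
have /factor_theorem [p2 hp2] : root (p - (p.[b%:P])%:P) b%:P.
  by rewrite /root hornerD hornerN hornerC subrr.
set w := p.[b%:P] in hp2 *.
have /factor_theorem [w1 hw1] : root (w - (w.[a])%:P) a.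
  by rewrite /root hornerD hornerN hornerC subrr.
exists w1%:P, p2; split=> //.
have -> : X = ('X - a%:P)%:P by rewrite /X /Xp /cst rmorphB.
rewrite -rmorphM mulrC -hw1 [Y * _]mulrC /Y /Yp /cst -hp2 /evalXY -/w rmorphB /=; ring.
Qed.

Lemma dX_mul_at p q : evalXY (dX (p * q)) (a, b) =
  evalXY (dX p) (a, b) * evalXY q (a, b) + evalXY p (a, b) * evalXY (dX q) (a, b).
Proof.
suff -> : dX (p * q) = dX p * q + p * dX q by rewrite evalXYD !evalXYM.
apply/polyP => i; rewrite /dX coefD coef_map_id0 ?deriv0 // !coefM.
rewrite raddf_sum /= -big_split /=; apply: eq_bigr => j _.
by rewrite derivM !coef_map_id0 ?deriv0.
Qed.

Lemma dX_X : dX X = 1.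
Proof. by rewrite /dX raddfB /Xp /cst /= !map_polyC /= derivX derivC subr0. Qed.

Lemma dX_Y : dX Y = 0.
Proof.
rewrite /dX raddfB /= /cst map_polyC /= derivC subr0.
by apply/polyP => i; rewrite coef_map_id0 ?deriv0 // /Yp coefX coef0; case: (i == 1)%N;
  rewrite ?deriv0 // -polyC1 derivC.
Qed.

Lemma evalXY_dX_decomp (A B : P2) : evalXY (dX (X * A + Y * B)) (a, b) = evalXY A (a, b).
Proof.
rewrite /dX raddfD /= -!/(dX _) evalXYD !dX_mul_at dX_X dX_Y evalXY_X evalXY_Y.
by rewrite -cst0 -cst1 !evalXY_cst; ring.
Qed.

Lemma evalXY_dY_decomp (A B : P2) : evalXY (dY (X * A + Y * B)) (a, b) = evalXY B (a, b).
Proof.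
rewrite /dY !derivD !derivM derivB derivB /Xp /Yp /cst !derivC derivX !subr0.
rewrite !evalXYD !evalXYM -/X -/Y evalXY_X evalXY_Y.
by rewrite -cst0 -cst1 !evalXY_cst; ring.
Qed.

End Bivariate.

Section LocalParameter.
Variable C : fieldType.
Notation P2 := {poly {poly C}}.

Lemma tangent_relation (f X Y A B : P2) (al be : C) : be != 0 ->
  in_pow_ideal X Y 1 (A - cst al) -> in_pow_ideal X Y 1 (B - cst be) ->
  f = X * A + Y * B ->
  exists g q e, in_pow_ideal X Y 2 e /\ Y = cst g * X + q * f + e.
Proof.
move=> be_neq0 hA hB ->.
exists (- (al / be)), (cst be^-1), (- (cst be^-1 * (X * (A - cst al) + Y * (B - cst be)))).
split.
  by rewrite -mulNr; apply/in_pow_idealMl/in_pow_idealD;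
    [apply: in_pow_idealXl | apply: in_pow_idealYl].
have inv_be : cst be^-1 * cst be = 1 by rewrite -cstM mulVf // cst1.
have -> : cst (- (al / be)) = - (cst al * cst be^-1) by rewrite -cstM /cst !rmorphN.
transitivity (cst be^-1 * cst be * Y); first by rewrite inv_be mul1r.
ring.
Qed.

(* If S is congruent to a multiple of T modulo f and (T, S)^2, then T is a
   uniformising parameter: every h has a T-adic expansion modulo (f) + (T, S)^m. *)
Variables f T S : P2.
Hypothesis const_mod : forall z : P2, exists c, in_pow_ideal T S 1 (z - cst c).
Hypothesis tangent : exists g q e, in_pow_ideal T S 2 e /\ S = cst g * T + q * f + e.

Lemma expansion_step k z : in_pow_ideal T S k z ->
  exists c q z', in_pow_ideal T S k.+1 z' /\ z = cst c * T ^+ k + q * f + z'.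
Proof.
have [g [q0 [e [he defS]]]] := tangent.
elim: k z => [|k IH] z /=.
  move=> _; have [c hc] := const_mod z; exists c, 0, (z - cst c).
  by split=> //; rewrite expr0 mulr1 mul0r addr0 addrC subrK.
move=> [u [v [/IH [c1 [q1 [u' [hu' ->]]]] /IH [c2 [q2 [v' [hv' ->]]]] ->]]].
exists (c1 + c2 * g), (T * q1 + S * q2 + cst c2 * T ^+ k * q0),
  (T * u' + S * v' + cst c2 * T ^+ k * e).
split; last by rewrite cstD cstM exprS defS; ring.
change (in_pow_ideal T S k.+2 (T * u' + S * v' + cst c2 * T ^+ k * e)).
apply: in_pow_idealD; first by apply: in_pow_idealD; [apply: in_pow_idealXl | apply: in_pow_idealYl].
by rewrite -mulrA; apply: in_pow_idealMl; rewrite -addn2; apply: in_pow_idealM => //;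
  apply: in_pow_ideal_expX.
Qed.

Lemma power_series_expansion m h : exists (d : nat -> C) q z,
  in_pow_ideal T S m z /\ h = \sum_(i < m) cst (d i) * T ^+ i + q * f + z.
Proof.
elim: m => [|m [d [q [z [hz ->]]]]].
  by exists (fun _ => 0), 0, h; rewrite big_ord0 mul0r !add0r.
have [c [q' [z' [hz' ->]]]] := expansion_step hz.
exists (fun i => if i == m then c else d i), (q + q'), z'; split=> //.
rewrite big_ord_recr /= eqxx; under [in RHS]eq_bigr => i _ do rewrite ltn_eqF //.
ring.
Qed.

End LocalParameter.

Section LocalIdeal.
Variable C : fieldType.
Notation P2 := {poly {poly C}}.
Variable f : P2.
Implicit Types (P : C * C) (w : P2).

Definition in_local_ideal P m w :=
  exists q z, in_pow_ideal (Xp C - cst P.1) (Yp C - cst P.2) m z /\ w = q * f + z.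

Definition loc_param P : P2 :=
  if evalXY (dY f) P != 0 then Xp C - cst P.1 else Yp C - cst P.2.

Lemma loc_param_expansion P : evalXY f P = 0 ->
    evalXY (dX f) P != 0 \/ evalXY (dY f) P != 0 ->
  forall m h, exists d : nat -> C,
    in_local_ideal P m (h - \sum_(i < m) cst (d i) * loc_param P ^+ i).
Proof.
case: P => a b /= f0 smooth m h; set X := Xp C - cst a; set Y := Yp C - cst b.
have [A [B [_ _ defF]]] : in_pow_ideal X Y 1 f.
  by have := sub_evalXY_in_max_ideal a b f; rewrite f0 cst0 subr0.
have hA := sub_evalXY_in_max_ideal a b A; have hB := sub_evalXY_in_max_ideal a b B.
set al := evalXY A (a, b) in hA; set be := evalXY B (a, b) in hB.
have dXf : evalXY (dX f) (a, b) = al by rewrite defF evalXY_dX_decomp.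
have dYf : evalXY (dY f) (a, b) = be by rewrite defF evalXY_dY_decomp.
have const_mod z : exists c, in_pow_ideal X Y 1 (z - cst c).
  by eexists; apply: sub_evalXY_in_max_ideal.
suff [d [q [z [hz ->]]]] : exists (d : nat -> C) q z, in_pow_ideal X Y m z /\
    h = \sum_(i < m) cst (d i) * loc_param (a, b) ^+ i + q * f + z.
  by exists d, q, z; split=> //; ring.
rewrite /loc_param dYf; case: eqVneq => [be0 | be_neq0] /=.
  have al_neq0 : al != 0 by case: smooth; rewrite ?dXf ?dYf ?be0 ?eqxx.
  have const_modYX z : exists c, in_pow_ideal Y X 1 (z - cst c).
    by have [c /in_pow_ideal_sym] := const_mod z; exists c.
  have tangent := tangent_relation al_neq0 (in_pow_ideal_sym hB) (in_pow_ideal_sym hA)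
    (etrans defF (addrC _ _)).
  have [d [q [z [/in_pow_ideal_sym hz ->]]]] := power_series_expansion const_modYX tangent m h.
  by exists d, q, z.
exact: power_series_expansion const_mod (tangent_relation be_neq0 hA hB defF) m h.
Qed.

Lemma in_local_ideal0 P m : in_local_ideal P m 0.
Proof. by exists 0, 0; rewrite mul0r addr0; split=> //; apply: in_pow_ideal0. Qed.

Lemma in_local_idealD P m w1 w2 :
  in_local_ideal P m w1 -> in_local_ideal P m w2 -> in_local_ideal P m (w1 + w2).
Proof.
move=> [q1 [z1 [hz1 ->]]] [q2 [z2 [hz2 ->]]].
by exists (q1 + q2), (z1 + z2); split; [apply: in_pow_idealD | ring].
Qed.

Lemma in_local_idealMl P m u w : in_local_ideal P m w -> in_local_ideal P m (u * w).
Proof.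
move=> [q [z [hz ->]]].
by exists (u * q), (u * z); split; [apply: in_pow_idealMl | ring].
Qed.

Lemma in_local_idealB P m w1 w2 :
  in_local_ideal P m w1 -> in_local_ideal P m w2 -> in_local_ideal P m (w1 - w2).
Proof.
by move=> h1 h2; apply: in_local_idealD => //; rewrite -mulN1r; apply: in_local_idealMl.
Qed.

Lemma in_local_ideal_vanishes P m w : in_local_ideal P m w -> vanishes_at f P m w.
Proof.
move=> [q [z [/in_pow_idealE [r hr] ->]]]; exists 1, q, (fun k => r k).
by rewrite mul1r hr -cst1 evalXY_cst oner_neq0.
Qed.

Lemma vanishes_atB P m w1 w2 :
  vanishes_at f P m w1 -> vanishes_at f P m w2 -> vanishes_at f P m (w1 - w2).
Proof.
move=> [u1 [q1 [r1 [hu1 e1]]]] [u2 [q2 [r2 [hu2 e2]]]].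
exists (u1 * u2), (u2 * q1 - u1 * q2), (fun k => u2 * r1 k - u1 * r2 k).
split; first by rewrite evalXYM mulf_neq0.
have -> : u1 * u2 * (w1 - w2) = u2 * (u1 * w1) - u1 * (u2 * w2) by ring.
rewrite e1 e2; set X := Xp C - cst P.1; set Y := Yp C - cst P.2.
have -> : \sum_(k < m.+1) (u2 * r1 k - u1 * r2 k) * X ^+ k * Y ^+ (m - k) =
    u2 * \sum_(k < m.+1) r1 k * X ^+ k * Y ^+ (m - k) -
    u1 * \sum_(k < m.+1) r2 k * X ^+ k * Y ^+ (m - k).
  by rewrite !mulr_sumr -sumrB; apply: eq_bigr => k _; rewrite !mulrBl !mulrA.
ring.
Qed.

End LocalIdeal.

(* The k-th copy of x in s (counting from 0) sits at index j with
   count_mem x (take j s) = k. *)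
Lemma big_count_mem (T : eqType) (V : nmodType) (x0 x : T) (F : nat -> V) (s : seq T) :
  \sum_(0 <= j < size s | nth x0 s j == x) F (count_mem x (take j s)) =
  \sum_(0 <= k < count_mem x s) F k.
Proof.
elim/last_ind: s => [|s y IH]; first by rewrite !big_geq.
rewrite size_rcons big_mkcond big_nat_recr //=.
rewrite (eq_big_nat _ _ (F2 := fun j => if nth x0 s j == x then F (count_mem x (take j s)) else 0));
  last first.
  move=> j /andP [_ hj]; rewrite nth_rcons hj -cats1 takel_cat //; exact: ltnW.
rewrite -big_mkcond IH nth_rcons ltnn eqxx -cats1 take_size_cat // count_cat /=.
by case: eqP => _ /=; rewrite ?addn1 ?big_nat_recr // !addn0 addr0.
Qed.

Section Interpolation.
Variable C : fieldType.
Notation P2 := {poly {poly C}}.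
Variables (f : P2) (D : seq (C * C)) (g : nat) (ups : 'I_g -> P2).
Hypothesis size_D : size D = g.
Hypothesis on_D : on_curve f D.
Hypothesis smooth_f : affine_smooth f.
Hypothesis ups_indep : forall c : 'rV[C]_g,
  vanishes_on f D (\sum_(k < g) cst (c ord0 k) * ups k) -> c = 0.

Implicit Types (P : C * C) (w : P2) (e : 'rV[C]_g).

Let x0 : C * C := (0, 0).

Definition occ_index (j : 'I_g) := count_mem (nth x0 D j) (take j D).

(* e collects, at each P of D, the coefficients of t_P^0, ..., t_P^(mult_P D - 1):
   the coefficient of t_P^k sits at the index of the k-th copy of P in D. *)
Definition expansion P e : P2 :=
  \sum_(j < g | nth x0 D j == P) cst (e ord0 j) * loc_param f P ^+ occ_index j.

Definition jet_at P w e := in_local_ideal f P (count_mem P D) (w - expansion P e).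

Lemma expansionD P e1 e2 : expansion P (e1 + e2) = expansion P e1 + expansion P e2.
Proof. by rewrite -big_split; apply: eq_bigr => j _; rewrite mxE cstD mulrDl. Qed.

Lemma expansionB P e1 e2 : expansion P (e1 - e2) = expansion P e1 - expansion P e2.
Proof. by rewrite -sumrB; apply: eq_bigr => j _; rewrite !mxE cstB mulrBl. Qed.

Lemma expansionZ P a e : expansion P (a *: e) = cst a * expansion P e.
Proof. by rewrite mulr_sumr; apply: eq_bigr => j _; rewrite mxE cstM mulrA. Qed.

Lemma expansion0 P : expansion P 0 = 0.
Proof. by apply: big1 => j _; rewrite mxE cst0 mul0r. Qed.

Lemma jet_at0 P : jet_at P 0 0.
Proof. by rewrite /jet_at expansion0 subr0; apply: in_local_ideal0. Qed.

Lemma jet_atD P w1 w2 e1 e2 :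
  jet_at P w1 e1 -> jet_at P w2 e2 -> jet_at P (w1 + w2) (e1 + e2).
Proof.
move=> h1 h2; rewrite /jet_at expansionD.
have -> : w1 + w2 - (expansion P e1 + expansion P e2) =
  (w1 - expansion P e1) + (w2 - expansion P e2) by ring.
exact: in_local_idealD.
Qed.

Lemma jet_atB P w1 w2 e1 e2 :
  jet_at P w1 e1 -> jet_at P w2 e2 -> jet_at P (w1 - w2) (e1 - e2).
Proof.
move=> h1 h2; rewrite /jet_at expansionB.
have -> : w1 - w2 - (expansion P e1 - expansion P e2) =
  (w1 - expansion P e1) - (w2 - expansion P e2) by ring.
exact: in_local_idealB.
Qed.

Lemma jet_at_comb P (w : 'I_g -> P2) (E : 'I_g -> 'rV[C]_g) (c : 'I_g -> C) :
  (forall k, jet_at P (w k) (E k)) ->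
  jet_at P (\sum_k cst (c k) * w k) (\sum_k c k *: E k).
Proof.
move=> hw; apply: (big_ind2 (jet_at P)) => [|??????|k _]; first exact: jet_at0.
  exact: jet_atD.
rewrite /jet_at expansionZ -mulrBr; exact/in_local_idealMl/hw.
Qed.

Lemma jet_at_vanishes P w : jet_at P w 0 -> vanishes_at f P (count_mem P D) w.
Proof.
by rewrite /jet_at expansion0 subr0; apply: in_local_ideal_vanishes.
Qed.

Lemma jet_exists w : exists e, forall P, P \in D -> jet_at P w e.
Proof.
have loc P : exists d : nat -> C, P \in D -> in_local_ideal f P (count_mem P D)
    (w - \sum_(i < count_mem P D) cst (d i) * loc_param f P ^+ i).
  have [PD|] := boolP (P \in D); last by exists (fun _ => 0).
  have [d hd] := loc_param_expansion (on_D PD) (smooth_f (on_D PD)) (count_mem P D) w.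
  by exists d.
have [d hd] := functional_choice _ loc.
exists (\row_j d (nth x0 D j) (occ_index j)) => P PD; rewrite /jet_at /expansion.
under eq_bigr => j /eqP Pj do rewrite mxE /occ_index Pj.
have := big_count_mem x0 P (fun i => cst (d P i) * loc_param f P ^+ i) D.
by rewrite !big_mkord size_D => ->; apply: hd.
Qed.

Definition comb (c : 'rV[C]_g) : P2 := \sum_(k < g) cst (c ord0 k) * ups k.

Lemma combB c1 c2 : comb (c1 - c2) = comb c1 - comb c2.
Proof. by rewrite /comb -sumrB; apply: eq_bigr => k _; rewrite !mxE cstB mulrBl. Qed.

Definition is_jet_mx (M : 'M[C]_g) := forall k P, P \in D -> jet_at P (ups k) (row k M).

Lemma jet_mx_exists : exists M, is_jet_mx M.
Proof.
have [E hE] := functional_choice _ (fun k => jet_exists (ups k)).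
by exists (\matrix_k E k) => k P PD; rewrite rowK; apply: hE.
Qed.

Lemma jet_comb M c P : is_jet_mx M -> P \in D -> jet_at P (comb c) (c *m M).
Proof. by move=> hM PD; rewrite mulmx_sum_row; apply: jet_at_comb => k; apply: hM. Qed.

Lemma jet_mx_unit M : is_jet_mx M -> M \in unitmx.
Proof.
move=> hM; rewrite -row_free_unit; apply/inj_row_free => c cM0.
apply: ups_indep => P PD; apply: jet_at_vanishes; rewrite -cM0; exact: jet_comb.
Qed.

Theorem interpolation h : exists c, vanishes_on f D (h - comb c) /\
  forall c', vanishes_on f D (h - comb c') -> c' = c.
Proof.
have [M hM] := jet_mx_exists; have [e he] := jet_exists h.
pose c := e *m invmx M.
have hc : vanishes_on f D (h - comb c).
  move=> P PD; apply: jet_at_vanishes; rewrite -(subrr e).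
  by rewrite -{2}(mulmxKV (jet_mx_unit hM) e); apply: jet_atB (he P PD) (jet_comb c hM PD).
exists c; split=> // c' hc'; apply/eqP; rewrite eq_sym -subr_eq0; apply/eqP/ups_indep; rewrite -/(comb _).
have -> : comb (c - c') = (h - comb c') - (h - comb c) by rewrite combB; ring.
by move=> P PD; apply: vanishes_atB; [apply: hc' | apply: hc].
Qed.

End Interpolation.

Theorem mainTheorem3 (R : realType) (n s : nat) (lambda : nat -> R[i])
  (Hn : (2 <= n)%N) (Hs : (2 <= s)%N) (Hcop : coprime n s)
  (Hsmooth : affine_smooth (nscurve n s lambda))
  (D : seq (R[i] * R[i]))
  (HdegD : size D = genus n s)
  (HonD : on_curve (nscurve n s lambda) D)
  (Hred : reduced (nscurve n s lambda) D)
  (Hns : nonspecial n s (nscurve n s lambda) D) :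
  forall h : {poly {poly R[i]}},
    exists c : 'rV[R[i]]_(genus n s),
      vanishes_on (nscurve n s lambda) D
        (h - \sum_(k < genus n s) cst (c ord0 k) * upsilon R[i] n s k) /\
      forall c' : 'rV[R[i]]_(genus n s),
        vanishes_on (nscurve n s lambda) D
          (h - \sum_(k < genus n s) cst (c' ord0 k) * upsilon R[i] n s k) ->
        c' = c.
Proof.
exact: interpolation HdegD HonD Hsmooth Hns.
Qed.
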